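(* Let $G=AB$ be a finite group that is the product of subgroups $A$ and $B$, and assume $G$ has a Hall $\pi$-subgroup. If $|x^G|$ is a $\pi$-number for every $\pi$-element $x\in A\cup B$ of prime power order, then $O_\pi(G)$ is a Hall $\pi$-subgroup of $G$. In particular, $G$ is $\pi$-separable.
   Context: $\pi$ is a set of primes; $x^G$ denotes the conjugacy class of $x$ in $G$, so $|x^G|=|G:C_G(x)|$; a $\pi$-number is a positive integer all of whose prime divisors lie in $\pi$; $O_\pi(G)$ is the largest normal $\pi$-subgroup of $G$. *)

From mathcomp Require Import all_boot all_fingroup all_solvable.
Set Implicit Arguments.
Unset Strict Implicit.
Unset Printing Implicit Defensive.
Local Open Scope group_scope.

Definition pi_sep_step (gT : finGroupType) (pi : nat_pred) (H K : {group gT}) : bool :=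
  (H <| K) && (pi.-group (K / H) || pi^'.-group (K / H)).

Definition pi_separable (gT : finGroupType) (pi : nat_pred) (G : {group gT}) : Prop :=
  exists s : seq {group gT}, path (pi_sep_step pi) 1%G s /\ last 1%G s = G.

From mathcomp Require Import all_boot all_fingroup all_solvable.
Set Implicit Arguments.
Unset Strict Implicit.
Unset Printing Implicit Defensive.
Local Open Scope group_scope.

(* If x is a p-element with p in pi and |x^G| is a pi-number, then for a Hall
   pi-subgroup H the indices |G : C_G(x)| and |G : H| are coprime, so
   G = C_G(x) H and the G-class of x equals its H-class.  Conjugating x into H
   by Sylow's theorem therefore puts the whole class x^G inside H, and its
   normal closure is a normal pi-subgroup: x lies in O_pi(G).  So A and B have
   no nontrivial pi-elements modulo O_pi(G), and G/O_pi(G) = (A/O_pi(G))(B/O_pi(G))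
   is a pi'-group. *)

Section HallClasses.

Variables (gT : finGroupType) (pi : nat_pred) (G H : {group gT}).
Hypothesis hallH : pi.-Hall(G) H.

Lemma cent1_mul_Hall x : pi.-nat #|x ^: G| -> 'C_G[x] * H = G.
Proof.
move=> pi_xG; apply: coprime_index_mulG (subsetIl _ _) (pHall_sub hallH) _.
rewrite index_cent1; apply: pnat_coprime pi_xG _.
by case/and3P: hallH.
Qed.

Lemma class_sub_Hall y : y \in H -> pi.-nat #|y ^: G| -> y ^: G \subset H.
Proof.
move=> Hy pi_yG; apply/subsetP=> _ /imsetP[g Gg ->].
rewrite -(cent1_mul_Hall pi_yG) in Gg.
have [c h /setIP[_ /cent1P/commute_sym/commgP/conjg_fixP yc] Hh ->] := mulsgP Gg.
by rewrite conjgM yc groupJ.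
Qed.

Lemma p_elt_conj_Hall p x :
  p \in pi -> x \in G -> p.-elt x -> exists2 g, g \in G & x ^ g \in H.
Proof.
move=> pi_p Gx p_x; have [P sylP] := Sylow_exists p H.
have sxG : <[x]> \subset G by rewrite cycle_subG.
have [g Gg sxP] := Sylow_subJ (subHall_Sylow hallH pi_p sylP) sxG p_x.
exists g^-1; first by rewrite groupV.
rewrite -mem_conjg; apply: (subsetP (subset_trans sxP _)) (cycle_id x).
by rewrite conjSg (pHall_sub sylP).
Qed.

Lemma p_elt_class_sub_Hall p x :
  p \in pi -> x \in G -> p.-elt x -> pi.-nat #|x ^: G| -> x ^: G \subset H.
Proof.
move=> pi_p Gx p_x pi_xG; have [g Gg Hxg] := p_elt_conj_Hall pi_p Gx p_x.
by rewrite -(classGidl x Gg) class_sub_Hall ?classGidl.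
Qed.

End HallClasses.

Lemma mem_pcore_class (gT : finGroupType) (pi : nat_pred) (G K : {group gT}) x :
  pi.-group K -> x \in G -> x ^: G \subset K -> x \in 'O_pi(G).
Proof.
move=> piK Gx sxGK; apply: (subsetP (pcore_max _ _)) (mem_gen (class_refl G x)).
  by rewrite (pgroupS _ piK) ?gen_subG.
by rewrite /normal gen_subG class_subG // norms_gen ?class_norm.
Qed.

Lemma quotient_p'group (gT : finGroupType) (pi : nat_pred) (N X : {group gT}) :
    (forall p x, prime p -> p \in pi -> x \in X -> p.-elt x -> x \in N) ->
  pi^'.-group (X / N).
Proof.
move=> piX_N; apply/pgroupP=> p p_pr /Cauchy[//|_ /morphimP[a Na Xa ->] oa].
apply/negP=> pi_p; have: coset N a.`_p = 1.
  by apply/coset_id/(piX_N p) => //; rewrite ?groupX ?p_elt_constt.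
rewrite (morph_constt _ _ Na) constt_p_elt; last by rewrite /p_elt oa pnat_id.
by move=> a1; move: oa p_pr; rewrite a1 order1 => <-.
Qed.

Lemma pcore_Hall_quotient (gT : finGroupType) (pi : nat_pred) (G : {group gT}) :
  pi^'.-group (G / 'O_pi(G)) -> pi.-Hall(G) 'O_pi(G).
Proof.
by move=> pi'GO; rewrite /pHall pcore_sub pcore_pgroup -card_quotient ?gFnorm.
Qed.

Lemma pcore_Hall_pi_separable (gT : finGroupType) (pi : nat_pred) (G : {group gT}) :
  pi.-Hall(G) 'O_pi(G) -> pi_separable pi G.
Proof.
case/and3P=> _ _ pi'iGO; exists [:: 'O_pi(G)%G; G]; split=> //=.
rewrite /pi_sep_step normal1 quotient_pgroup ?pcore_pgroup //= pcore_normal.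
by rewrite /pgroup card_quotient ?gFnorm ?pi'iGO ?orbT.
Qed.

Theorem mainTheorem3 (gT : finGroupType) (pi : nat_pred) (G A B : {group gT})
  (hGAB : A * B = G)
  (hHall : exists H : {group gT}, pi.-Hall(G) H)
  (hcls : forall x : gT, x \in A :|: B -> pi.-elt x ->
     (exists p k : nat, prime p /\ #[x] = (p ^ k)%N) ->
     pi.-nat #|x ^: G|) :
  pi.-Hall(G) 'O_pi(G) /\ pi_separable pi G.
Proof.
have [H hallH] := hHall.
have sAG : A \subset G by rewrite -hGAB mulG_subl.
have sBG : B \subset G by rewrite -hGAB mulG_subr.
have O_AB p x : prime p -> p \in pi -> x \in A :|: B -> p.-elt x -> x \in 'O_pi(G).
  move=> p_pr pi_p ABx p_x; have [k ox] := p_natP p_x.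
  have Gx : x \in G by case/setUP: ABx => [/(subsetP sAG)|/(subsetP sBG)].
  have pi_xG : pi.-nat #|x ^: G|.
    by apply: hcls ABx (pi_pnat p_x pi_p) _; exists p, k.
  have sxGH := p_elt_class_sub_Hall hallH pi_p Gx p_x pi_xG.
  exact: mem_pcore_class (pHall_pgroup hallH) Gx sxGH.
have defGO : G / 'O_pi(G) = A / 'O_pi(G) * (B / 'O_pi(G)).
  by rewrite -quotientMl ?hGAB ?(subset_trans sAG) ?gFnorm.
have hallO : pi.-Hall(G) 'O_pi(G).
  apply: pcore_Hall_quotient; rewrite defGO pgroupM !quotient_p'group //.
    by move=> p x p_pr pi_p Bx; apply: O_AB; rewrite // inE Bx orbT.
  by move=> p x p_pr pi_p Ax; apply: O_AB; rewrite // inE Ax.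
by split; last exact: pcore_Hall_pi_separable.
Qed.
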